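(* Let $0<c_1\le c_2$ be constants, let $n$ be sufficiently large, let $t\in[1,n^{0.1}]$, and let $H$ be an undirected graph on $n$ vertices in which every vertex has degree between $c_1t$ and $c_2t$ and which has no cycle of length at most $8$. Then for any two vertices $u,v$ of $H^2$, the number of paths of length $2$ in $H^2$ connecting $u$ and $v$ is $O(t)$, where the implied constant depends only on $c_1,c_2$.
   Context: $H^2$ (the square of $H$) is the graph on the vertex set of $H$ in which $u\neq v$ are adjacent if and only if there is a path of length exactly $2$ between $u$ and $v$ in $H$. *)

From HB Require Import structures.
From mathcomp Require Import all_boot all_order all_algebra.
From mathcomp Require Import reals exp.
Set Implicit Arguments. Unset Strict Implicit. Unset Printing Implicit Defensive.

(* Simple undirected graphs: a symmetric irreflexive relation e on a finType T. *)

Definition sq_adj (T : finType) (e : rel T) (u v : T) : bool :=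
  (u != v) && [exists w, e u w && e w v].

Definition deg (T : finType) (e : rel T) (v : T) : nat := #|[set w | e v w]|.

Definition no_cycle_upto (T : finType) (e : rel T) (m : nat) : Prop :=
  forall s : seq T, uniq s -> 3 <= size s <= m -> ~~ cycle e s.

Definition n_sq_paths2 (T : finType) (e : rel T) (u v : T) : nat :=
  #|[set w | [&& w != u, w != v, sq_adj e u w & sq_adj e w v]]|.

From HB Require Import structures.
From mathcomp Require Import all_boot all_order all_algebra.
From mathcomp Require Import reals exp.
Import Order.TTheory GRing.Theory Num.Theory.

(* Since H has no cycle of length at most 8, every closed walk of length at
   most 8 backtracks somewhere.  If u and v have a common neighbour m, then for
   a middle vertex w reached as u - a - w - b - v, the closed walk
   u a w b v m u forces w to be a neighbour of m, so there are at most
   deg m <= c2 t middle vertices.  Otherwise the closed walk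
   u a1 w1 b1 v b2 w2 a2 u through two middle vertices forces w1 = w2, so there
   is at most one. *)

Section NonBacktracking.
Context {T : finType}.

(* Only backtracks x y x strictly inside the sequence are excluded; a closed
   walk may still turn back at its base point. *)
Fixpoint nonbacktracking (s : seq T) : bool :=
  if s is x :: s' then
    (if s' is _ :: z :: _ then x != z else true) && nonbacktracking s'
  else true.

Context {e : rel T}.
Hypothesis e_irr : irreflexive e.
Context {k : nat}.
Hypothesis no_short_cycle : no_cycle_upto e k.

Lemma nonbacktracking_walk_uniq {p y} :
  path e y p -> nonbacktracking (y :: p) -> size p <= k -> uniq (y :: p).
Proof.
elim: p y => [|x s IHs] y //= /andP[eyx pxs] /andP[y_ne_s1 nb_xs] size_s.
have uniq_xs : uniq (x :: s) by apply: IHs => //; apply: ltnW.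
apply/andP; split=> //; apply/negP => y_in.
(* The first return to y closes a cycle of length i.+1, where i = 0 would be a
   loop and i = 1 a backtrack. *)
set i := index y (x :: s).
have i_lt : i < size (x :: s) by rewrite index_mem.
have nth_i : nth y (x :: s) i = y by rewrite nth_index.
have cyc_uniq : uniq (y :: take i (x :: s)).
  by rewrite /= in_take // ltnn take_uniq.
have cyc_cycle : cycle e (y :: take i (x :: s)).
  rewrite /= -[X in rcons _ X]nth_i -take_nth //.
  by have /(take_path i.+1) : path e y (x :: s) by rewrite /= eyx.
suff size_cyc : 3 <= size (y :: take i (x :: s)) <= k.
  by have := no_short_cycle _ cyc_uniq size_cyc; rewrite cyc_cycle.
rewrite /= size_take i_lt.
case: i i_lt nth_i {cyc_uniq cyc_cycle} => [|[|i]] i_lt nth_i.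
- by move: eyx; rewrite -nth_i e_irr.
- case: s y_ne_s1 nth_i i_lt {y_in IHs pxs nb_xs size_s uniq_xs} => //= z s.
  by move=> + zy; rewrite zy eqxx.
- exact: leq_trans i_lt size_s.
Qed.

Lemma closed_walk_backtracks p x :
  path e x p -> last x p = x -> 0 < size p <= k -> ~~ nonbacktracking (x :: p).
Proof.
move=> walk closed /andP[p_gt0 p_le]; apply/negP => nb.
have := nonbacktracking_walk_uniq walk nb p_le.
by case: p p_gt0 walk closed {nb p_le} => [|z p] //= _ _ <-; rewrite mem_last.
Qed.

End NonBacktracking.

Section GirthAtLeastNine.
Context {T : finType} {e : rel T}.
Hypotheses (e_sym : symmetric e) (e_irr : irreflexive e).
Hypothesis girth : no_cycle_upto e 8.

Let backtracks := closed_walk_backtracks e_irr girth.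

Lemma sq_mid_adj_common_nbr u v m a w b :
  u != v -> e u m -> e m v -> e u a -> e a w -> e w b -> e b v ->
  w != u -> w != v -> e m w.
Proof.
move=> uv um mv ua aw wb bv wu wv.
(* u a w b v m u can only backtrack at a = b or b = m; if a = b, the walk
   u a v m u forces a = m. *)
have := backtracks [:: a; w; b; v; m; u] u.
rewrite /= ua aw wb bv (e_sym v m) mv (e_sym m u) um => /(_ isT erefl isT).
rewrite (eq_sym u w) wu wv (eq_sym v u) uv /=.
have [<-|bm] := eqVneq b m; first by rewrite e_sym.
rewrite /= andbT negbK => /eqP ab; subst b.
have := backtracks [:: a; v; m; u] u.
rewrite /= ua bv (e_sym v m) mv (e_sym m u) um => /(_ isT erefl isT).
by rewrite uv (eq_sym v u) uv /= andbT negbK => /eqP <-.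
Qed.

Lemma sq_mid_unique u v a1 w1 b1 a2 w2 b2 :
  (forall m, ~~ (e u m && e m v)) ->
  e u a1 -> e a1 w1 -> e w1 b1 -> e b1 v -> w1 != u -> w1 != v ->
  e u a2 -> e a2 w2 -> e w2 b2 -> e b2 v -> w2 != u -> w2 != v ->
  w1 = w2.
Proof.
move=> no_common ua1 aw1 wb1 bv1 wu1 wv1 ua2 aw2 wb2 bv2 wu2 wv2.
have ab1 : a1 != b1.
  by apply: contraNneq _ (no_common a1) => ab; rewrite ua1 ab bv1.
have ab2 : b2 != a2.
  by apply: contraNneq _ (no_common a2) => ba; rewrite ua2 -ba bv2.
(* u a1 w1 b1 v b2 w2 a2 u can only backtrack at b1 = b2, and then
   u a1 w1 b1 w2 a2 u only at w1 = w2. *)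
have := backtracks [:: a1; w1; b1; v; b2; w2; a2; u] u.
rewrite /= ua1 aw1 wb1 bv1 (e_sym v b2) bv2 (e_sym b2 w2) wb2 (e_sym w2 a2) aw2.
rewrite (e_sym a2 u) ua2 => /(_ isT erefl isT).
rewrite (eq_sym u w1) wu1 ab1 wv1 (eq_sym v w2) wv2 ab2 wu2 /= andbT negbK.
move=> /eqP b1b2; subst b2.
have := backtracks [:: a1; w1; b1; w2; a2; u] u.
rewrite /= ua1 aw1 wb1 (e_sym b1 w2) wb2 (e_sym w2 a2) aw2 (e_sym a2 u) ua2.
move=> /(_ isT erefl isT).
by rewrite (eq_sym u w1) wu1 ab1 ab2 wu2 /= andbT negbK => /eqP.
Qed.

Lemma sq_path2_midP u v w :
  reflect
    ((exists a b, [/\ e u a, e a w, e w b & e b v]) /\ w != u /\ w != v)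
    (w \in [set w | [&& w != u, w != v, sq_adj e u w & sq_adj e w v]]).
Proof.
rewrite inE /sq_adj; apply: (iffP and4P).
  case=> wu wv /andP[_ /existsP[a /andP[ua aw]]].
  move=> /andP[_ /existsP[b /andP[wb bv]]].
  by split=> //; exists a, b.
case=> [[a [b [ua aw wb bv]]] [wu wv]]; split=> //.
  by rewrite eq_sym wu; apply/existsP; exists a; rewrite ua aw.
by rewrite wv; apply/existsP; exists b; rewrite wb bv.
Qed.

Lemma n_sq_paths2_le_deg u v m :
  u != v -> e u m -> e m v -> n_sq_paths2 e u v <= deg e m.
Proof.
move=> uv um mv; apply/subset_leq_card/subsetP => w.
move=> /sq_path2_midP[[a [b [ua aw wb bv]]] [wu wv]]; rewrite inE.
exact: sq_mid_adj_common_nbr uv um mv ua aw wb bv wu wv.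
Qed.

Lemma n_sq_paths2_le1 u v :
  (forall m, ~~ (e u m && e m v)) -> n_sq_paths2 e u v <= 1.
Proof.
move=> no_common; apply/card_le1_eqP => w1 w2.
move=> /sq_path2_midP[[a1 [b1 [ua1 aw1 wb1 bv1]]] [wu1 wv1]].
move=> /sq_path2_midP[[a2 [b2 [ua2 aw2 wb2 bv2]]] [wu2 wv2]].
apply/esym.
exact: sq_mid_unique no_common ua1 aw1 wb1 bv1 wu1 wv1 ua2 aw2 wb2 bv2 wu2 wv2.
Qed.

Lemma n_sq_paths2_small {u v} : u != v ->
  n_sq_paths2 e u v <= 1 \/ exists m, n_sq_paths2 e u v <= deg e m.
Proof.
move=> uv; have [/existsP[m /andP[um mv]] | /existsPn no_common] :=
  boolP [exists m, e u m && e m v].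
  by right; exists m; apply: n_sq_paths2_le_deg.
by left; apply: n_sq_paths2_le1.
Qed.

End GirthAtLeastNine.

Local Open Scope ring_scope.

Theorem lemmaA5 (R : realType) (c1 c2 : R) :
  0 < c1 -> c1 <= c2 ->
  exists K : R, exists N0 : nat,
    forall n : nat, (N0 <= n)%N ->
    forall t : R, 1 <= t -> t <= (n%:R) `^ (10%:R)^-1 ->
    forall (T : finType) (e : rel T),
      #|T| = n -> symmetric e -> irreflexive e ->
      (forall x : T, c1 * t <= (deg e x)%:R <= c2 * t) ->
      no_cycle_upto e 8 ->
      forall u v : T, u != v -> (n_sq_paths2 e u v)%:R <= K * t.
Proof.
move=> c1_gt0 c12; exists (c2 + 1), 0%N.
move=> n _ t t_ge1 _ T e _ sym irr hdeg girth u v uv.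
have c2_ge0 : 0 <= c2 by apply: le_trans (ltW c1_gt0) c12.
have t_ge0 : 0 <= t by apply: le_trans t_ge1.
have t_le : t <= (c2 + 1) * t by rewrite mulrDl mul1r lerDr mulr_ge0.
have [le1 | [m le_deg]] := n_sq_paths2_small sym irr girth uv.
  by apply: le_trans (le_trans _ t_ge1) t_le; rewrite lern1.
have /andP[_ deg_le] := hdeg m.
apply: le_trans (le_trans deg_le _); first by rewrite ler_nat.
by rewrite mulrDl mul1r lerDl.
Qed.
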